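(* Let $\Pi$ be a min-FGPP with $\alpha_1\ge0$ and $\alpha_2>0$. Let $(G=(V,E),k,p)$ be an instance of $\Pi$, write $V=\{v_1,\dots,v_{|V|}\}$, and let $\mathcal{F}$ be a $(|V|,k+\frac{p}{\alpha_2})$-universal set. For each $f\in\mathcal{F}$ let $G_f$ be a copy of $G$ in which the copy of $v_i$ is colored red if $f(i)=0$ and blue if $f(i)=1$. Then $(G,k,p)$ is a yes-instance of $\Pi$ if and only if at least one of the instances $(G_f,k,p)$, $f\in\mathcal{F}$, is a yes-instance of NC-$\Pi$.
   Context: Graphs are finite, simple and undirected. For $X\subseteq V$, $E(X)$ is the set of edges with both endpoints in $X$, $E(X,V\setminus X)$ the set of edges with exactly one endpoint in $X$, and $\mathrm{val}(X)=\alpha_1|E(X)|+\alpha_2|E(X,V\setminus X)|$. The min-FGPP $\Pi$: given $G=(V,E)$, $k\in\mathbb{N}$, $p\in\mathbb{R}$, decide whether some $X\subseteq V$ with $|X|=k$ has $\mathrm{val}(X)\le p$. NC-$\Pi$: given a graph $G=(V,E)$ each of whose nodes is colored red or blue, $k\in\mathbb{N}$ and $p\in\mathbb{R}$, decide whether there is $X\subseteq V$ consisting of exactly $k$ red nodes and no blue nodes, such that every node outside $X$ adjacent to a node of $X$ is blue, and $\mathrm{val}(X)\le p$. For real $t\ge0$, a set $\mathcal{F}$ of functions $\{1,\dots,n\}\to\{0,1\}$ is an $(n,t)$-universal set if for every $I\subseteq\{1,\dots,n\}$ with $|I|\le t$ and every $f':I\to\{0,1\}$ there is $f\in\mathcal{F}$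 with $f(i)=f'(i)$ for all $i\in I$. *)

From mathcomp Require Import all_boot all_order all_algebra.
Set Implicit Arguments. Unset Strict Implicit. Unset Printing Implicit Defensive.
Import Order.TTheory GRing.Theory Num.Theory.
Local Open Scope ring_scope.

(* A finite simple graph on vertex set V = {v_0,...,v_(n-1)} = 'I_n, given by
   a symmetric irreflexive adjacency relation e. *)
Definition simple_graph (n : nat) (e : rel 'I_n) : Prop :=
  symmetric e /\ irreflexive e.

(* |E(X)| : edges {u,v} (counted once, u < v) with both endpoints in X. *)
Definition edges_in (n : nat) (e : rel 'I_n) (X : {set 'I_n}) : nat :=
  #|[set uv : 'I_n * 'I_n | [&& (uv.1 < uv.2)%N, e uv.1 uv.2,
                               uv.1 \in X & uv.2 \in X]]|.

(* |E(X, V \ X)| : edges with exactly one endpoint in X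
   (counted as ordered pairs (u,v) with u in X, v outside X). *)
Definition edges_out (n : nat) (e : rel 'I_n) (X : {set 'I_n}) : nat :=
  #|[set uv : 'I_n * 'I_n | [&& e uv.1 uv.2, uv.1 \in X & uv.2 \notin X]]|.

Definition fgpp_val (R : realFieldType) (a1 a2 : R) (n : nat) (e : rel 'I_n)
  (X : {set 'I_n}) : R :=
  a1 * (edges_in e X)%:R + a2 * (edges_out e X)%:R.

Definition fgpp_yes (R : realFieldType) (a1 a2 : R) (n : nat) (e : rel 'I_n)
  (k : nat) (p : R) : Prop :=
  exists X : {set 'I_n}, #|X| = k /\ fgpp_val a1 a2 e X <= p.

Definition red (n : nat) (col : 'I_n -> bool) (v : 'I_n) : bool := ~~ col v.
Definition blue (n : nat) (col : 'I_n -> bool) (v : 'I_n) : bool := col v.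

Definition nc_fgpp_yes (R : realFieldType) (a1 a2 : R) (n : nat) (e : rel 'I_n)
  (col : 'I_n -> bool) (k : nat) (p : R) : Prop :=
  exists X : {set 'I_n},
    [/\ #|X| = k,
        (forall x, x \in X -> red col x),
        (forall u x, u \notin X -> x \in X -> e u x -> blue col u)
      & fgpp_val a1 a2 e X <= p].

(* (n,t)-universal set; functions {1..n} -> {0,1} are finite functions
   'I_n -> bool (false = 0, true = 1). *)
Definition universal_set (R : realFieldType) (n : nat) (t : R)
  (F : {set {ffun 'I_n -> bool}}) : Prop :=
  forall (I : {set 'I_n}), (#|I|%:R <= t) ->
  forall f' : 'I_n -> bool,
  exists2 f, f \in F & forall i, i \in I -> f i = f' i.

From mathcomp Require Import all_boot all_order all_algebra.
Import Order.TTheory GRing.Theory Num.Theory.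
Local Open Scope ring_scope.

(* A solution X of the uncoloured instance has at most p / a2 boundary edges,
   hence at most k + p / a2 vertices in X together with its outer
   neighbourhood. A universal set therefore contains a colouring that is red
   on X and blue on that neighbourhood, and X solves the coloured instance.
   The converse is immediate since the coloured problem only adds
   constraints. *)

Section Neighbourhood.

Context {n : nat} (e : rel 'I_n).

Definition outer_nbhd (X : {set 'I_n}) : {set 'I_n} :=
  [set u | (u \notin X) && [exists x in X, e x u]].

Lemma card_outer_nbhd_le_edges_out (X : {set 'I_n}) :
  (#|outer_nbhd X| <= edges_out e X)%N.
Proof.
rewrite /edges_out.
set S := [set uv : 'I_n * 'I_n | _].
apply: leq_trans (leq_imset_card snd S).
apply/subset_leq_card/subsetP => u.
rewrite inE => /andP [uX /existsP [x /andP [xX exu]]].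
by apply/imsetP; exists (x, u); rewrite // inE /= exu xX uX.
Qed.

Lemma card_setU_outer_nbhd_le (X : {set 'I_n}) :
  (#|X :|: outer_nbhd X| <= #|X| + edges_out e X)%N.
Proof.
by rewrite cardsU (leq_trans (leq_subr _ _)) // leq_add2l
  card_outer_nbhd_le_edges_out.
Qed.

End Neighbourhood.

Lemma edges_out_le_budget {R : realFieldType} {a1 a2 p : R} {n}
    {e : rel 'I_n} {X : {set 'I_n}} :
  0 <= a1 -> 0 < a2 -> fgpp_val a1 a2 e X <= p ->
  (edges_out e X)%:R <= p / a2.
Proof.
move=> ha1 ha2 hv; rewrite ler_pdivlMr // mulrC (le_trans _ hv) //.
by rewrite /fgpp_val lerDr mulr_ge0.
Qed.

Lemma nc_fgpp_yes_fgpp_yes {R : realFieldType} (a1 a2 p : R) {n} (e : rel 'I_n)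
    (col : 'I_n -> bool) k :
  nc_fgpp_yes a1 a2 e col k p -> fgpp_yes a1 a2 e k p.
Proof. by move=> [X [hX _ _ hv]]; exists X. Qed.

Lemma nc_fgpp_yes_separating {R : realFieldType} {a1 a2 p : R} {n}
    {e : rel 'I_n} {col : 'I_n -> bool} {X : {set 'I_n}} :
  symmetric e -> fgpp_val a1 a2 e X <= p ->
  {in X :|: outer_nbhd e X, col =1 [predC X]} ->
  nc_fgpp_yes a1 a2 e col #|X| p.
Proof.
move=> esym hv colX; exists X; split=> // [x xX | u x uX xX eux].
  by rewrite /red colX ?inE xX.
have uN : u \in outer_nbhd e X.
  by rewrite inE uX; apply/existsP; exists x; rewrite xX esym.
by rewrite /blue colX // inE uN orbT.
Qed.

Theorem lemma11 (R : realFieldType) (a1 a2 : R) (ha1 : 0 <= a1) (ha2 : 0 < a2)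
  (n : nat) (e : rel 'I_n) (hG : simple_graph e) (k : nat) (p : R)
  (F : {set {ffun 'I_n -> bool}})
  (hF : universal_set (k%:R + p / a2) F) :
  fgpp_yes a1 a2 e k p <->
  (exists2 f, f \in F & nc_fgpp_yes a1 a2 e (fun v => f v) k p).
Proof.
split=> [[X [hX hv]] | [f _]]; last exact: nc_fgpp_yes_fgpp_yes.
have hI : #|X :|: outer_nbhd e X|%:R <= k%:R + p / a2.
  rewrite -hX; apply: (@le_trans _ _ (#|X|%:R + (edges_out e X)%:R)).
    by rewrite -natrD ler_nat card_setU_outer_nbhd_le.
  by rewrite lerD2l (edges_out_le_budget ha1 ha2 hv).
have [f fF hf] := hF _ hI [predC X].
exists f => //; rewrite -hX; apply: nc_fgpp_yes_separating hv hf.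
by case: hG.
Qed.
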